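(* Let $F\colon[0,+\infty)^N\to[0,+\infty)$ be a metric preserving function. Then for all $(s_i)_{i=1}^N,(s'_i)_{i=1}^N\in[0,+\infty)^N$: (1) $|F(s_1,\dots,s_N)-F(s'_1,\dots,s'_N)|\le F(|s_1-s'_1|,\dots,|s_N-s'_N|)$; (2) if $s_i\le 2s'_i$ for every $i$, then $F(s_1,\dots,s_N)\le 2F(s'_1,\dots,s'_N)$.
   Context: A function $F\colon[0,+\infty)^N\to[0,+\infty)$ is metric preserving if for any metric spaces $(X_1,d_1),\dots,(X_N,d_N)$, $d_F((x_i),(x'_i)):=F(d_1(x_1,x'_1),\dots,d_N(x_N,x'_N))$ is a metric on $X_1\times\cdots\times X_N$. *)

From Stdlib Require Import Reals.
From Stdlib Require Fin.
Open Scope R_scope.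

Definition is_metric (X : Type) (d : X -> X -> R) : Prop :=
  (forall x y, 0 <= d x y) /\
  (forall x y, d x y = 0 <-> x = y) /\
  (forall x y, d x y = d y x) /\
  (forall x y z, d x z <= d x y + d y z).

Definition nonneg_vec (N : nat) (s : Fin.t N -> R) : Prop :=
  forall i, 0 <= s i.

Definition metric_preserving (N : nat) (F : (Fin.t N -> R) -> R) : Prop :=
  (forall s, nonneg_vec N s -> 0 <= F s) /\
  forall (X : Fin.t N -> Type) (d : forall i, X i -> X i -> R),
    (forall i, is_metric (X i) (d i)) ->
    is_metric (forall i, X i)
      (fun x x' => F (fun i => d i (x i) (x' i))).

(* Both inequalities are instances of the triangle inequality of the product
   metric d_F, for suitable metric spaces in each coordinate.  For (1) take
   every factor to be the real line, with the points 0, s' and s.  For (2)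
   take every factor to be the plane with the sup metric, in which the points
   (0,0), (s/2,s') and (s,0) form an isosceles triangle with base s and legs
   s' as soon as 0 <= s <= 2 s'. *)

From Stdlib Require Import Reals.
From Stdlib Require Fin.
From Stdlib Require Import Lra FunctionalExtensionality.
Open Scope R_scope.

Lemma Rabs_sub_metric : is_metric R (fun x y => Rabs (x - y)).
Proof.
  split; [|split; [|split]].
  - intros x y; apply Rabs_pos.
  - intros x y; split.
    + intros H; destruct (Req_dec (x - y) 0) as [E|E]; [lra|].
      now destruct (Rabs_no_R0 _ E).
    + intros ->; rewrite Rminus_diag; apply Rabs_R0.
  - intros x y; apply Rabs_minus_sym.
  - intros x y z; replace (x - z) with ((x - y) + (y - z)) by ring.
    apply Rabs_triang.
Qed.

Definition sup_dist (u v : R * R) : R :=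
  Rmax (Rabs (fst u - fst v)) (Rabs (snd u - snd v)).

Lemma sup_dist_metric : is_metric (R * R) sup_dist.
Proof.
  destruct Rabs_sub_metric as [pos [sep [sym tri]]].
  unfold sup_dist; split; [|split; [|split]].
  - intros u v; eapply Rle_trans; [apply pos | apply Rmax_l].
  - intros [u1 u2] [v1 v2]; simpl; split.
    + intros H.
      assert (H1 : Rabs (u1 - v1) = 0)
        by (apply Rle_antisym; [rewrite <- H; apply Rmax_l | apply pos]).
      assert (H2 : Rabs (u2 - v2) = 0)
        by (apply Rle_antisym; [rewrite <- H; apply Rmax_r | apply pos]).
      apply (proj1 (sep _ _)) in H1, H2; now subst.
    + intros E; injection E as -> ->; rewrite !Rminus_diag, Rabs_R0.
      apply Rmax_left, Rle_refl.
  - intros u v; now rewrite (sym (fst u)), (sym (snd u)).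
  - intros u v w; apply Rmax_lub.
    + eapply Rle_trans; [apply tri|]; apply Rplus_le_compat; apply Rmax_l.
    + eapply Rle_trans; [apply tri|]; apply Rplus_le_compat; apply Rmax_r.
Qed.

Section MetricPreserving.

Variables (N : nat) (F : (Fin.t N -> R) -> R).
Hypothesis HF : metric_preserving N F.

Lemma metric_preserving_triangle (X : Fin.t N -> Type)
    (d : forall i, X i -> X i -> R) (x y z : forall i, X i) :
  (forall i, is_metric (X i) (d i)) ->
  F (fun i => d i (x i) (z i)) <=
    F (fun i => d i (x i) (y i)) + F (fun i => d i (y i) (z i)).
Proof.
  intros Hd; destruct HF as [_ HM].
  destruct (HM X d Hd) as [_ [_ [_ tri]]]; apply tri.
Qed.

Lemma metric_preserving_sub_le (s s' : Fin.t N -> R) :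
  nonneg_vec N s -> nonneg_vec N s' ->
  F s - F s' <= F (fun i => Rabs (s i - s' i)).
Proof.
  intros Hs Hs'.
  pose proof (metric_preserving_triangle (fun _ => R)
    (fun _ x y => Rabs (x - y)) (fun _ => 0) s' s (fun _ => Rabs_sub_metric))
    as T; simpl in T.
  assert (Habs : forall t : Fin.t N -> R, nonneg_vec N t ->
            (fun i => Rabs (0 - t i)) = t).
  { intros t Ht; apply functional_extensionality; intros i.
    rewrite Rabs_minus_sym, Rminus_0_r; apply Rabs_pos_eq, Ht. }
  rewrite (Habs s Hs), (Habs s' Hs') in T.
  replace (fun i => Rabs (s i - s' i)) with (fun i => Rabs (s' i - s i))
    by (apply functional_extensionality; intros i; apply Rabs_minus_sym).
  lra.
Qed.

Lemma metric_preserving_le_double (s s' : Fin.t N -> R) :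
  nonneg_vec N s -> (forall i, s i <= 2 * s' i) -> F s <= 2 * F s'.
Proof.
  intros Hs Hle.
  pose proof (metric_preserving_triangle (fun _ => (R * R)%type)
    (fun _ => sup_dist) (fun _ => (0, 0)) (fun i => (s i / 2, s' i))
    (fun i => (s i, 0)) (fun _ => sup_dist_metric)) as T; simpl in T.
  assert (Hbase : (fun i => sup_dist (0, 0) (s i, 0)) = s).
  { apply functional_extensionality; intros i; unfold sup_dist; simpl.
    rewrite Rminus_diag, Rabs_R0, Rminus_0_l, Rabs_Ropp, Rabs_pos_eq by apply Hs.
    apply Rmax_left, Hs. }
  assert (Hleg : forall i, Rmax (Rabs (s i / 2)) (Rabs (s' i)) = s' i).
  { intros i; specialize (Hs i); specialize (Hle i).
    rewrite Rabs_pos_eq, (Rabs_pos_eq (s' i)) by lra; apply Rmax_right; lra. }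
  assert (Hleg1 : (fun i => sup_dist (0, 0) (s i / 2, s' i)) = s').
  { apply functional_extensionality; intros i; unfold sup_dist; simpl.
    rewrite !Rminus_0_l, !Rabs_Ropp; apply Hleg. }
  assert (Hleg2 : (fun i => sup_dist (s i / 2, s' i) (s i, 0)) = s').
  { apply functional_extensionality; intros i; unfold sup_dist; simpl.
    replace (s i / 2 - s i) with (- (s i / 2)) by field.
    rewrite Rabs_Ropp, Rminus_0_r; apply Hleg. }
  rewrite Hbase, Hleg1, Hleg2 in T; lra.
Qed.

End MetricPreserving.

Theorem mainTheorem5 (N : nat) (F : (Fin.t N -> R) -> R) :
  metric_preserving N F ->
  forall s s' : Fin.t N -> R, nonneg_vec N s -> nonneg_vec N s' ->
    Rabs (F s - F s') <= F (fun i => Rabs (s i - s' i)) /\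
    ((forall i, s i <= 2 * s' i) -> F s <= 2 * F s').
Proof.
  intros HF s s' Hs Hs'; split.
  - apply Rabs_le; split.
    + replace (fun i => Rabs (s i - s' i)) with (fun i => Rabs (s' i - s i))
        by (apply functional_extensionality; intros i; apply Rabs_minus_sym).
      pose proof (metric_preserving_sub_le N F HF s' s Hs' Hs); lra.
    + now apply metric_preserving_sub_le.
  - now apply metric_preserving_le_double.
Qed.
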